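(* Suppose that $S$ is a finite regular semigroup of minimum cardinality with the property that $S$ possesses a permutation matching but no involution matching. Then $S$ is a $0$-rectangular band.
   Context: For an element $a$ of a semigroup $S$, $V(a)=\{b\in S: aba=a,\ bab=b\}$ is the set of inverses of $a$. A permutation matching of a finite regular semigroup $S$ is a bijection $\phi:S\to S$ with $\phi(a)\in V(a)$ for all $a\in S$. An involution matching is a permutation matching $\phi$ with $\phi\circ\phi=\mathrm{id}_S$. A $0$-rectangular band is a completely $0$-simple semigroup all of whose $\mathscr{H}$-classes are trivial (equivalently, a Rees matrix semigroup $\mathcal{M}^0[\{1\};I,\Lambda;P]$ over the trivial group with a regular sandwich matrix $P$). *)

From mathcomp Require Import all_boot.
Set Implicit Arguments. Unset Strict Implicit. Unset Printing Implicit Defensive.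

Section Semigroups.
Variables (T : finType) (op : T -> T -> T).

Definition semigroup : Prop := associative op.

Definition regular_sg : Prop := forall a : T, exists b : T, op (op a b) a = a.

Definition inverse_of (a b : T) : Prop := op (op a b) a = a /\ op (op b a) b = b.

Definition permutation_matching (phi : T -> T) : Prop :=
  bijective phi /\ forall a, inverse_of a (phi a).

Definition involution_matching (phi : T -> T) : Prop :=
  permutation_matching phi /\ forall a, phi (phi a) = a.

Definition has_permutation_matching : Prop := exists phi, permutation_matching phi.
Definition has_involution_matching : Prop := exists phi, involution_matching phi.

Definition is_zero (z : T) : Prop := forall x, op z x = z /\ op x z = z.

Definition is_ideal (I : {set T}) : Prop :=
  I != set0 /\ forall x s, x \in I -> op s x \in I /\ op x s \in I.

Definition idempotent (e : T) : Prop := op e e = e.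

Definition zero_simple (z : T) : Prop :=
  is_zero z /\ (exists a b, op a b <> z) /\
  forall I : {set T}, is_ideal I -> I = [set z] \/ I = setT.

Definition primitive_idempotent (z e : T) : Prop :=
  idempotent e /\ e <> z /\
  forall f, idempotent f -> f <> z -> op e f = f -> op f e = f -> f = e.

Definition completely_zero_simple : Prop :=
  exists z, zero_simple z /\ exists e, primitive_idempotent z e.

(* principal right / left ideals a S^1 and S^1 a, as predicates *)
Definition in_right_ideal (a x : T) : Prop := x = a \/ exists s, x = op a s.
Definition in_left_ideal (a x : T) : Prop := x = a \/ exists s, x = op s a.

Definition greenH (a b : T) : Prop :=
  (forall x, in_right_ideal a x <-> in_right_ideal b x) /\
  (forall x, in_left_ideal a x <-> in_left_ideal b x).

Definition zero_rectangular_band : Prop :=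
  completely_zero_simple /\ forall a b, greenH a b -> a = b.

End Semigroups.

(* A regular semigroup has an involution matching as soon as every J-class J carries an
   involution a ↦ a' with a' ∈ V(a) ∩ J.  In a minimal counterexample S, pick a J-class J
   without one.  The principal factor J^0 still has a permutation matching but no involution
   matching, so minimality forces S = J ∪ {0}.  J is not closed under squaring (otherwise each
   element of J lies in a group H-class and group inversion is such an involution), so a^2 ∉ J
   for some a ∈ J, and a^2 is a zero: S is 0-simple, hence completely 0-simple.
   Finally H is a congruence whose nonzero classes all have the same size c.  The quotient S/H
   has no involution matching, because an involution of S/H lifts (an H-class contains at most
   one inverse of a given element), and it has a permutation matching by Hall's theorem: phi
   maps the c|P| elements above a set P of nonzero classes into the c|N(P)| elements above the
   set N(P) of their inverse classes.  By minimality S/H is as large as S: H is trivial. *)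

From mathcomp Require Import all_boot zify.
Set Implicit Arguments. Unset Strict Implicit. Unset Printing Implicit Defensive.

(** * Green's relations *)

Section Green.
Variables (T : finType) (op : T -> T -> T).
Hypothesis assoc : associative op.

(* S^1 is modelled by option T, None being the adjoined identity. *)
Definition lmul1 (s : option T) x := if s is Some s then op s x else x.
Definition rmul1 (t : option T) x := if t is Some t then op x t else x.
Definition mul1 (s t : option T) : option T :=
  match s, t with
  | Some a, Some b => Some (op a b)
  | Some a, None => Some a
  | None, t => t
  end.

Lemma lmul1A s s' x : lmul1 s (lmul1 s' x) = lmul1 (mul1 s s') x.
Proof. by case: s; case: s' => //= *; rewrite assoc. Qed.
Lemma rmul1A t t' x : rmul1 t (rmul1 t' x) = rmul1 (mul1 t' t) x.
Proof. by case: t; case: t' => //= *; rewrite assoc. Qed.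
Lemma lmul1_rmul1 s t x : lmul1 s (rmul1 t x) = rmul1 t (lmul1 s x).
Proof. by case: s; case: t => //= *; rewrite assoc. Qed.

Definition leR x y := [exists t, x == rmul1 t y].
Definition leL x y := [exists s, x == lmul1 s y].
Definition leJ x y := [exists s, [exists t, x == rmul1 t (lmul1 s y)]].
Definition eqR x y := leR x y && leR y x.
Definition eqL x y := leL x y && leL y x.
Definition eqJ x y := leJ x y && leJ y x.
Definition eqH x y := eqR x y && eqL x y.

Lemma leR_refl x : leR x x. Proof. by apply/existsP; exists None. Qed.
Lemma leL_refl x : leL x x. Proof. by apply/existsP; exists None. Qed.
Lemma leJ_refl x : leJ x x.
Proof. by apply/existsP; exists None; apply/existsP; exists None. Qed.

Lemma leR_trans y x w : leR x y -> leR y w -> leR x w.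
Proof.
move=> /existsP[t /eqP->] /existsP[t' /eqP->].
by apply/existsP; exists (mul1 t' t); rewrite rmul1A.
Qed.
Lemma leL_trans y x w : leL x y -> leL y w -> leL x w.
Proof.
move=> /existsP[s /eqP->] /existsP[s' /eqP->].
by apply/existsP; exists (mul1 s s'); rewrite lmul1A.
Qed.
Lemma leJ_trans y x w : leJ x y -> leJ y w -> leJ x w.
Proof.
move=> /existsP[s /existsP[t /eqP->]] /existsP[s' /existsP[t' /eqP->]].
apply/existsP; exists (mul1 s s'); apply/existsP; exists (mul1 t' t).
by rewrite lmul1_rmul1 rmul1A lmul1A.
Qed.

Lemma leR_mulr x y : leR (op x y) x. Proof. by apply/existsP; exists (Some y). Qed.
Lemma leL_mull x y : leL (op y x) x. Proof. by apply/existsP; exists (Some y). Qed.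
Lemma leR_leJ x y : leR x y -> leJ x y.
Proof. by move=> /existsP[t /eqP->]; apply/existsP; exists None; apply/existsP; exists t. Qed.
Lemma leL_leJ x y : leL x y -> leJ x y.
Proof. by move=> /existsP[s /eqP->]; apply/existsP; exists s; apply/existsP; exists None. Qed.

Lemma eqR_refl x : eqR x x. Proof. by rewrite /eqR leR_refl. Qed.
Lemma eqL_refl x : eqL x x. Proof. by rewrite /eqL leL_refl. Qed.
Lemma eqJ_refl x : eqJ x x. Proof. by rewrite /eqJ leJ_refl. Qed.
Lemma eqH_refl x : eqH x x. Proof. by rewrite /eqH eqR_refl eqL_refl. Qed.

Lemma eqR_sym x y : eqR x y = eqR y x. Proof. by rewrite /eqR andbC. Qed.
Lemma eqL_sym x y : eqL x y = eqL y x. Proof. by rewrite /eqL andbC. Qed.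
Lemma eqJ_sym x y : eqJ x y = eqJ y x. Proof. by rewrite /eqJ andbC. Qed.
Lemma eqH_sym x y : eqH x y = eqH y x. Proof. by rewrite /eqH eqR_sym eqL_sym. Qed.

Lemma eqR_trans y x w : eqR x y -> eqR y w -> eqR x w.
Proof. by move=> /andP[a b] /andP[c d]; rewrite /eqR (leR_trans a c) (leR_trans d b). Qed.
Lemma eqL_trans y x w : eqL x y -> eqL y w -> eqL x w.
Proof. by move=> /andP[a b] /andP[c d]; rewrite /eqL (leL_trans a c) (leL_trans d b). Qed.
Lemma eqJ_trans y x w : eqJ x y -> eqJ y w -> eqJ x w.
Proof. by move=> /andP[a b] /andP[c d]; rewrite /eqJ (leJ_trans a c) (leJ_trans d b). Qed.
Lemma eqH_trans y x w : eqH x y -> eqH y w -> eqH x w.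
Proof. by move=> /andP[a b] /andP[c d]; rewrite /eqH (eqR_trans a c) (eqL_trans b d). Qed.

Definition inverseb a b := (op (op a b) a == a) && (op (op b a) b == b).

Lemma inverseP a b : reflect (inverse_of op a b) (inverseb a b).
Proof. by apply: (iffP andP) => -[/eqP ? /eqP ?]. Qed.

Lemma inverseb_sym a b : inverseb a b = inverseb b a.
Proof. by rewrite /inverseb andbC. Qed.

Lemma inverseb_eqJ a b : inverseb a b -> eqJ a b.
Proof.
move=> /andP[/eqP aba /eqP bab]; apply/andP; split; apply/existsP.
  by exists (Some a); apply/existsP; exists (Some a); rewrite /= aba.
by exists (Some b); apply/existsP; exists (Some b); rewrite /= bab.
Qed.

(* [spow a n] is a^(n+1): a semigroup has no a^0. *)
Definition spow a n := iter n (op a) a.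

Lemma spowS a n : spow a n.+1 = op a (spow a n). Proof. by []. Qed.
Lemma spowD a m n : spow a (m + n).+1 = op (spow a m) (spow a n).
Proof. by elim: m => [|m IH]; rewrite ?add0n // addSn spowS IH spowS assoc. Qed.
Lemma spowSr a n : spow a n.+1 = op (spow a n) a.
Proof. by rewrite -[n in LHS]addn0 spowD. Qed.

Lemma spow_idempotent a : exists m, op (spow a m) (spow a m) = spow a m.
Proof.
have: ~~ injectiveb (fun i : 'I_#|T|.+1 => spow a i).
  by apply/injectiveP => /leq_card; rewrite card_ord ltnn.
case/injectivePn => i [j] neq_ij eq_ij.
wlog lt_ij : i j neq_ij eq_ij / i < j.
  move=> wlog_ij; case: (ltngtP i j) => [|gt_ij|/val_inj eq]; first exact: wlog_ij.
    by apply: (wlog_ij j i); rewrite // eq_sym.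
  by rewrite eq eqxx in neq_ij.
set p := j - i.
have shift k : spow a (i + k) = spow a (j + k).
  by elim: k => [|k IH]; rewrite ?addn0 // !addnS !spowS IH.
have period q k : spow a (i + k + q * p) = spow a (i + k).
  elim: q => [|q IH]; first by rewrite mul0n addn0.
  have -> : i + k + q.+1 * p = j + (k + q * p) by rewrite mulSn /p; lia.
  by rewrite -shift addnA IH.
(* a^K with K = (i+1)p is idempotent: K >= i+1 and p divides K. *)
have le_iK : i.+1 <= i.+1 * p by rewrite leq_pmulr // subn_gt0.
exists (i.+1 * p).-1; rewrite -spowD.
have -> : ((i.+1 * p).-1 + (i.+1 * p).-1).+1 = i + ((i.+1 * p).-1 - i) + i.+1 * p.
  by lia.
by rewrite period; congr spow; lia.
Qed.

Lemma stable_right x y : leJ x (op x y) -> exists u, x = op (op x y) u.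
Proof.
move=> /existsP[s /existsP[t /eqP x_eq]].
set c := rmul1 t y.
have suff_c w : x = op (op x c) w -> exists u, x = op (op x y) u.
  rewrite /c; case: t {x_eq c} => [t|] /= x_eq; last by exists w.
  by exists (op t w); rewrite {1}x_eq !assoc.
have {}x_eq : x = lmul1 s (op x c).
  by rewrite {1}x_eq /c; case: s {x_eq}; case: t {c suff_c} => //= *; rewrite !assoc.
case: s x_eq => [s|] /= x_eq; last by apply: (suff_c c); rewrite -!x_eq.
have x_pow n : x = op (spow s n) (op x (spow c n)).
  by elim: n => [|n IH] //; rewrite {1}IH {1}x_eq spowSr spowS !assoc.
have [m idem_m] := spow_idempotent c.
have x_idem : op x (spow c m) = x by rewrite {1}(x_pow m) -!assoc idem_m -(x_pow m).
by apply: (suff_c (spow c (m + m))); rewrite -assoc -spowS spowD idem_m x_idem.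
Qed.

Lemma spow_idempotent_mull x u m : x = op (op x x) u ->
  op (spow x m) (spow x m) = spow x m -> op (spow x m) x = x.
Proof.
move=> x_eq idem_m.
have x_pow n : x = op (spow x n) (op x (spow u n)).
  elim: n => [|n IH]; first by rewrite /= assoc.
  by rewrite {1}x_eq -assoc {2}IH spowS spowSr !assoc.
by rewrite {2}(x_pow m) assoc idem_m -(x_pow m).
Qed.

End Green.

Definition dual (T : Type) (op : T -> T -> T) a b := op b a.

Section Dual.
Variables (T : finType) (op : T -> T -> T).
Hypothesis assoc : associative op.

Lemma dual_assoc : associative (dual op).
Proof. by move=> x y w; rewrite /dual assoc. Qed.

Lemma leJ_dual x y : leJ (dual op) x y = leJ op x y.
Proof.
by apply/idP/idP => /existsP[s /existsP[t /eqP->]]; apply/existsP; exists t;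
  apply/existsP; exists s; apply/eqP; case: s; case: t => //= *; rewrite /dual assoc.
Qed.

Lemma eqH_dual x y : eqH (dual op) x y = eqH op x y.
Proof. by rewrite /eqH andbC. Qed.

Lemma spow_dual x n : spow (dual op) x n = spow op x n.
Proof. by elim: n => [|n IH] //; rewrite spowS IH (spowSr assoc). Qed.

Lemma stable_left x y : leJ op x (op y x) -> exists u, x = op u (op y x).
Proof. by rewrite -leJ_dual; apply: (stable_right dual_assoc). Qed.

Lemma spow_idempotent_mulr x u m : x = op u (op x x) ->
  op (spow op x m) (spow op x m) = spow op x m -> op x (spow op x m) = x.
Proof. by have := @spow_idempotent_mull _ _ dual_assoc x u m; rewrite /dual !spow_dual. Qed.

End Dual.

(** * Group inverses and local involutions *)

Section GroupInverse.
Variables (T : finType) (op : T -> T -> T).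
Hypothesis assoc : associative op.

Definition group_inverse x :=
  odflt x [pick b | inverseb op x b && (op x b == op b x)].

Lemma commuting_inverse_unique x b b' :
  inverseb op x b -> op x b = op b x -> inverseb op x b' -> op x b' = op b' x -> b = b'.
Proof.
move=> /andP[/eqP xbx /eqP bxb] xb_bx /andP[/eqP xb'x /eqP b'xb'] xb'_b'x.
(* both xb and xb' equal the product (bx)(b'x) = (xb)(xb') *)
have xb_eq : op x b = op x b'.
  transitivity (op (op b x) (op b' x)); first by rewrite -assoc [op x (op b' x)]assoc xb'x.
  by rewrite -xb_bx -xb'_b'x assoc xbx.
by rewrite -[LHS]bxb -assoc xb_eq assoc -xb_bx xb_eq xb'_b'x b'xb'.
Qed.

Lemma group_inverse_spec x : leJ op x (op x x) ->
  inverseb op x (group_inverse x) /\ op x (group_inverse x) = op (group_inverse x) x.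
Proof.
move=> x_le_xx; rewrite /group_inverse; case: pickP => [b /andP[? /eqP ?] | no_inv] //=.
have [u x_eq] := stable_right assoc x_le_xx.
have [u' x_eq'] := stable_left assoc x_le_xx.
have [m idem_m] := spow_idempotent assoc x.
(* e = x^(m+1) is an identity for x, and x^(2m+1) is the inverse of x in the group H_e *)
have ex := spow_idempotent_mull assoc x_eq idem_m.
have xe := spow_idempotent_mulr assoc x_eq' idem_m.
have e_pow n : op (spow op x m) (spow op x n) = spow op x n.
  by elim: n => [|n IH] //; rewrite spowS assoc ex.
have x_b : op x (spow op x (m + m)) = spow op x m by rewrite -spowS spowD.
have b_x : op (spow op x (m + m)) x = spow op x m by rewrite -(spowSr assoc) spowD.
by have := no_inv (spow op x (m + m)); rewrite /inverseb x_b b_x ex e_pow !eqxx.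
Qed.

Lemma group_inverseK x : leJ op x (op x x) -> group_inverse (group_inverse x) = x.
Proof.
move=> /group_inverse_spec[inv_x comm_x].
rewrite {1}/group_inverse; case: pickP => [b /andP[inv_b /eqP comm_b] | no_inv] /=.
  by apply/esym/(commuting_inverse_unique (x := group_inverse x)); rewrite // inverseb_sym.
by have := no_inv x; rewrite inverseb_sym inv_x comm_x eqxx.
Qed.

Definition Jclass a := [set b | eqJ op a b].

Lemma inJclass a b : (b \in Jclass a) = eqJ op a b. Proof. by rewrite inE. Qed.

Definition local_involution (C : {set T}) (f : {ffun T -> T}) :=
  [forall a in C, [&& f a \in C, inverseb op a (f a) & f (f a) == a]].

Definition has_local_involution (C : {set T}) := [exists f, local_involution C f].

Lemma Jclass_eq a b : eqJ op a b -> Jclass a = Jclass b.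
Proof.
move=> ab; apply/setP => x; rewrite !inJclass; apply/idP/idP => [ax|].
  by apply: (eqJ_trans assoc _ ax); rewrite eqJ_sym.
exact: eqJ_trans.
Qed.

Lemma local_involution_square_closed a0 :
  {in Jclass a0, forall a, op a a \in Jclass a0} -> has_local_involution (Jclass a0).
Proof.
move=> sq_closed; apply/existsP; exists [ffun a => group_inverse a].
apply/forallP => a; apply/implyP => a_in; rewrite !ffunE.
have a_le_aa : leJ op a (op a a).
  have := sq_closed a a_in; move: a_in; rewrite !inJclass eqJ_sym => a0a a0aa.
  by case/andP: (eqJ_trans assoc a0a a0aa).
have [inv_a _] := group_inverse_spec a_le_aa.
rewrite group_inverseK // inv_a eqxx /= andbT inJclass.
by apply: (eqJ_trans assoc (y := a)); [rewrite -inJclass | apply: inverseb_eqJ].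
Qed.

Lemma involution_matching_of_local :
  (forall a, has_local_involution (Jclass a)) -> has_involution_matching op.
Proof.
move=> loc.
pose psi a := if [pick f | local_involution (Jclass a) f] is Some f then f a else a.
have psiP a : inverseb op a (psi a) /\ psi (psi a) = a.
  have [f pick_f f_loc] : exists2 f,
      [pick g | local_involution (Jclass a) g] = Some f & local_involution (Jclass a) f.
    by case: pickP => [f|none]; [exists f | have /existsP[f] := loc a; rewrite none].
  have /forallP/(_ a) := f_loc; rewrite !inJclass eqJ_refl /= => /and3P[fa_in inv_fa /eqP ffa].
  by rewrite /psi pick_f -(Jclass_eq fa_in) pick_f ffa.
exists psi; split; last by move=> a; case: (psiP a).
split; first by apply: inv_bij => a; case: (psiP a).
by move=> a; apply/inverseP; case: (psiP a).
Qed.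

End GroupInverse.

(** * The principal factor of a J-class *)

Section PrincipalFactor.
Variables (T : finType) (op : T -> T -> T).
Hypothesis assoc : associative op.
Variable a0 : T.
Local Notation J := (Jclass op a0).

Lemma Jclass_convex x y w :
  x \in J -> w \in J -> leJ op w y -> leJ op y x -> y \in J.
Proof.
rewrite !inJclass => /andP[_ x_le] /andP[w_le _] wy yx; apply/andP; split.
  exact: (leJ_trans assoc w_le wy).
exact: (leJ_trans assoc yx x_le).
Qed.

(* The principal factor J^0: products leaving J collapse to the zero [None]. *)
Definition factor := option {x | x \in J}.

Definition factor_op (a b : factor) : factor :=
  if a is Some x then (if b is Some y then insub (op (val x) (val y)) else None) else None.

Lemma factor_op0r a : factor_op a None = None. Proof. by case: a. Qed.

Lemma factor_opAl x y w :
  factor_op (factor_op (Some x) (Some y)) (Some w) = insub (op (op (val x) (val y)) (val w)).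
Proof.
rewrite /=; case: insubP => [u _ <- | xy_notin] //=.
apply/esym/insubN; apply: contra xy_notin => xyw_in.
by apply: Jclass_convex (valP x) xyw_in _ _; apply: leR_leJ; apply: leR_mulr.
Qed.

Lemma factor_opAr x y w :
  factor_op (Some x) (factor_op (Some y) (Some w)) = insub (op (val x) (op (val y) (val w))).
Proof.
rewrite /=; case: insubP => [u _ <- | yw_notin] //=.
apply/esym/insubN; apply: contra yw_notin => xyw_in.
by apply: Jclass_convex (valP y) xyw_in _ _; [apply: leL_leJ; apply: leL_mull |
  apply: leR_leJ; apply: leR_mulr].
Qed.

Lemma factor_assoc : associative factor_op.
Proof. by move=> [x|] [y|] [w|]; rewrite ?factor_opAl ?factor_opAr ?assoc ?factor_op0r. Qed.

Lemma card_factor : #|{: factor}| = #|J|.+1.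
Proof. by rewrite card_option card_sig. Qed.

Lemma permutation_matching_Jclass phi x :
  permutation_matching op phi -> (phi x \in J) = (x \in J).
Proof.
move=> [_ /(_ x)/inverseP/inverseb_eqJ x_phix]; rewrite !inJclass.
apply/idP/idP => [a0_phix|a0x]; last exact: (eqJ_trans assoc a0x x_phix).
by apply: (eqJ_trans assoc a0_phix); rewrite eqJ_sym.
Qed.

Lemma insub_Some w (u : {x | x \in J}) : insub w = Some u -> w = val u.
Proof. by case: insubP => [? _ <- [->] | _]. Qed.

Definition factor_map (phi : T -> T) (a : factor) : factor :=
  if a is Some x then insub (phi (val x)) else None.

Lemma factor_map_Some phi x (phix : phi (val x) \in J) :
  factor_map phi (Some x) = Some (Sub (phi (val x)) phix).
Proof. exact: insubT. Qed.

Lemma factor_mapK phi psi :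
  cancel phi psi -> (forall x, (phi x \in J) = (x \in J)) ->
  cancel (factor_map phi) (factor_map psi).
Proof.
move=> phiK phiJ [x|] //; have phix : phi (val x) \in J by rewrite phiJ (valP x).
by rewrite factor_map_Some /= phiK valK.
Qed.

Lemma factor_permutation_matching phi :
  permutation_matching op phi -> permutation_matching factor_op (factor_map phi).
Proof.
move=> phiP; have [[psi phiK psiK] phi_inv] := phiP.
have phiJ x := permutation_matching_Jclass x phiP.
have psiJ y : (psi y \in J) = (y \in J) by rewrite -phiJ psiK.
split; first by exists (factor_map psi); apply: factor_mapK.
move=> [x|] //; have phix : phi (val x) \in J by rewrite phiJ (valP x).
have [xyx yxy] := phi_inv (val x).
by rewrite factor_map_Some; split; rewrite factor_opAl SubK ?xyx ?yxy ?valK // insubT.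
Qed.

Lemma local_involution_of_factor :
  has_involution_matching factor_op -> has_local_involution op J.
Proof.
move=> [psi [[_ psi_inv] psiK]]; apply/existsP.
exists [ffun a => oapp (fun x => oapp val a (psi (Some x))) a (insub a)].
apply/forallP => a; apply/implyP => a_in; rewrite !ffunE.
set x : {x | x \in J} := Sub a a_in.
have -> /= : insub a = Some x by apply: insubT.
case psi_x : (psi (Some x)) => [y|]; last first.
  by have [] := psi_inv (Some x); rewrite psi_x factor_op0r.
have [xyx yxy] := psi_inv (Some x); rewrite psi_x !factor_opAl in xyx yxy.
rewrite /= (valP y) valK /= -psi_x psiK eqxx andbT.
move/insub_Some: xyx; move/insub_Some: yxy; rewrite /x !SubK => yxy xyx.
by rewrite /inverseb xyx yxy !eqxx.
Qed.

End PrincipalFactor.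

(** * Idempotents and H-classes *)

Section Idempotents.
Variables (T : finType) (op : T -> T -> T).
Hypothesis assoc : associative op.

Lemma leR_idempotent a e : leR op a e -> op e e = e -> op e a = a.
Proof. by move=> /existsP[[t|] /eqP->] ee //=; rewrite assoc ee. Qed.

Lemma leL_idempotent a e : leL op a e -> op e e = e -> op a e = a.
Proof. by move=> /existsP[[s|] /eqP->] ee //=; rewrite -assoc ee. Qed.

Lemma eqH_idempotent e f : op e e = e -> op f f = f -> eqH op e f -> e = f.
Proof.
move=> ee ff /andP[/andP[_ fe] /andP[ef _]].
by rewrite -[LHS](leL_idempotent ef ff) (leR_idempotent fe ee).
Qed.

Lemma inverse_eqR a b : inverseb op a b -> eqR op (op a b) a.
Proof.
move=> /andP[/eqP aba _]; rewrite /eqR leR_mulr.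
by apply/existsP; exists (Some a); rewrite /= aba.
Qed.

Lemma inverse_eqL a b : inverseb op a b -> eqL op (op a b) b.
Proof.
move=> /andP[_ /eqP bab]; rewrite /eqL leL_mull.
by apply/existsP; exists (Some b); rewrite /= assoc bab.
Qed.

Lemma inverse_idempotent a b : inverseb op a b -> op (op a b) (op a b) = op a b.
Proof. by move=> /andP[/eqP aba _]; rewrite assoc aba. Qed.

Lemma inverse_eqH_unique a b b' :
  inverseb op a b -> inverseb op a b' -> eqH op b b' -> b = b'.
Proof.
move=> ab ab' /andP[bRb' bLb'].
have ba := ab; rewrite inverseb_sym in ba; have b'a := ab'; rewrite inverseb_sym in b'a.
have ab_eq : op a b = op a b'.
  apply: eqH_idempotent (inverse_idempotent ab) (inverse_idempotent ab') _.
  rewrite /eqH (eqR_trans assoc (inverse_eqR ab)) 1?eqR_sym ?(inverse_eqR ab') //.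
  apply: (eqL_trans assoc (inverse_eqL ab)); apply: (eqL_trans assoc bLb').
  by rewrite eqL_sym inverse_eqL.
have ba_eq : op b a = op b' a.
  apply: eqH_idempotent (inverse_idempotent ba) (inverse_idempotent b'a) _.
  rewrite /eqH (eqL_trans assoc (inverse_eqL ba)) 1?eqL_sym ?(inverse_eqL b'a) // andbT.
  apply: (eqR_trans assoc (inverse_eqR ba)); apply: (eqR_trans assoc bRb').
  by rewrite eqR_sym inverse_eqR.
move: ab ab' => /andP[_ /eqP bab] /andP[_ /eqP b'ab'].
by rewrite -[LHS]bab -assoc ab_eq assoc ba_eq b'ab'.
Qed.

Definition Hsize x := #|[set a | eqH op a x]|.

(* Green's lemma: if x = w t' and w = x t, right multiplication by t maps the
   H-class of x injectively into that of w, with left inverse given by t'. *)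
Lemma Hsize_eqR_le x w : eqR op x w -> Hsize x <= Hsize w.
Proof.
move=> /andP[/existsP[t' /eqP x_eq] /existsP[t /eqP w_eq]].
have transl a : eqH op a x -> rmul1 op t' (rmul1 op t a) = a /\ eqH op (rmul1 op t a) w.
  case/andP=> aRx /andP[/existsP[s /eqP a_eq] /existsP[s' /eqP x_eq']].
  have back : rmul1 op t' (rmul1 op t a) = a.
    by rewrite a_eq -!(lmul1_rmul1 assoc) -w_eq -x_eq.
  split=> //; apply/andP; split.
    apply: (eqR_trans assoc (y := a)).
      by apply/andP; split; apply/existsP; [exists t | exists t'; rewrite back].
    apply: (eqR_trans assoc aRx).
    by apply/andP; split; apply/existsP; [exists t' | exists t]; apply/eqP.
  apply/andP; split; apply/existsP.
    by exists s; rewrite a_eq -(lmul1_rmul1 assoc) -w_eq.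
  by exists s'; rewrite w_eq x_eq' (lmul1_rmul1 assoc).
have sub : [set rmul1 op t a | a in [set a | eqH op a x]] \subset [set a | eqH op a w].
  by apply/subsetP => y /imsetP[a]; rewrite inE => /transl[_ aw] ->; rewrite inE.
apply: leq_trans (subset_leq_card sub).
rewrite card_in_imset // => a b; rewrite !inE => /transl[a_back _] /transl[b_back _] ab.
by rewrite -a_back -b_back ab.
Qed.

Lemma Hsize_eqR x w : eqR op x w -> Hsize x = Hsize w.
Proof. by move=> xw; apply/anti_leq; rewrite !Hsize_eqR_le // eqR_sym. Qed.

End Idempotents.

Lemma Hsize_eqL (T : finType) (op : T -> T -> T) x w :
  associative op -> eqL op x w -> Hsize op x = Hsize op w.
Proof.
move=> assoc xw.
have Hsize_dual y : Hsize (dual op) y = Hsize op y.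
  by apply: eq_card => a; rewrite !inE eqH_dual.
by rewrite -!Hsize_dual; apply: (Hsize_eqR (dual_assoc assoc)).
Qed.

(** * Hall's marriage theorem *)

Section Hall.
Variables (X Y : finType) (adj : X -> {set Y}).

Definition neighbours (P : {set X}) := \bigcup_(x in P) adj x.

Definition hall_condition (D : {set X}) (R : {set Y}) :=
  forall P : {set X}, P \subset D -> #|P| <= #|neighbours P :&: R|.

Definition matching_on (D : {set X}) (R : {set Y}) (f : X -> Y) :=
  {in D &, injective f} /\ {in D, forall x, f x \in adj x :&: R}.

Lemma hall_condition_sub (D D' : {set X}) (R : {set Y}) :
  D' \subset D -> hall_condition D R -> hall_condition D' R.
Proof. by move=> sD'D hallD P sPD'; apply/hallD/(subset_trans sPD'). Qed.

Lemma hall_condition_critical (D P0 : {set X}) (R : {set Y}) :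
  hall_condition D R -> P0 \subset D -> #|neighbours P0 :&: R| <= #|P0| ->
  hall_condition (D :\: P0) (R :\: neighbours P0).
Proof.
move=> hallD sP0D critP0 P sP.
have disjP : [disjoint P & P0].
  by rewrite disjoints_subset (subset_trans sP) // setDE subsetIr.
have sPP0 : P :|: P0 \subset D by rewrite subUset sP0D (subset_trans sP (subsetDl _ _)).
have sN : neighbours (P :|: P0) :&: R \subset
          (neighbours P :&: (R :\: neighbours P0)) :|: (neighbours P0 :&: R).
  apply/subsetP => y; rewrite /neighbours bigcup_setU !inE.
  by case: (y \in \bigcup_(x in P0) adj x); case: (y \in \bigcup_(x in P) adj x); case: (y \in R).
have := hallD _ sPP0; rewrite cardsU (disjoint_setI0 disjP) cards0 subn0.
have := subset_leq_card sN; have := (leq_card_setU (neighbours P :&: (R :\: neighbours P0))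
  (neighbours P0 :&: R)).1.
lia.
Qed.

Lemma hall_condition_surplus (D : {set X}) (R : {set Y}) x0 y1 :
  (forall P : {set X}, P \subset D :\ x0 -> P != set0 -> #|P| < #|neighbours P :&: R|) ->
  hall_condition (D :\ x0) (R :\ y1).
Proof.
move=> surplus P sP; have [->|P_n0] := eqVneq P set0; first by rewrite cards0.
have sN : neighbours P :&: R \subset (neighbours P :&: (R :\ y1)) :|: [set y1].
  by apply/subsetP => y; rewrite !inE; case: (y == y1); case: (y \in neighbours P); case: (y \in R).
have := subset_leq_card sN; have := (leq_card_setU (neighbours P :&: (R :\ y1)) [set y1]).1.
have := surplus P sP P_n0; rewrite cards1; lia.
Qed.

Lemma matching_on_glue (D1 D2 : {set X}) (R R2 : {set Y}) f1 f2 :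
  R2 \subset R -> {in D1, forall x, f1 x \notin R2} ->
  matching_on D1 R f1 -> matching_on D2 R2 f2 ->
  matching_on (D1 :|: D2) R (fun x => if x \in D1 then f1 x else f2 x).
Proof.
move=> sR2R f1_out [inj1 f1_in] [inj2 f2_in].
have f2_R2 x : x \in D2 -> f2 x \in R2 by move/f2_in; rewrite inE => /andP[].
have inD2 x : x \in D1 :|: D2 -> x \notin D1 -> x \in D2 by rewrite inE => /orP[->|].
split=> [x y xD yD|x xD].
  case: ifP => xD1; case: ifP => yD1 fxy.
  - exact: inj1.
  - by have := f1_out x xD1; rewrite fxy f2_R2 ?inD2 ?yD1.
  - by have := f1_out y yD1; rewrite -fxy f2_R2 ?inD2 ?xD1.
  - by apply: inj2 fxy; rewrite inD2 ?xD1 ?yD1.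
case: ifP => xD1; first exact: f1_in.
have /f2_in := inD2 x xD (negbT xD1).
by rewrite !inE => /andP[-> /(subsetP sR2R)->].
Qed.

Lemma hall_matching_on (y0 : Y) (D : {set X}) (R : {set Y}) :
  hall_condition D R -> exists f, matching_on D R f.
Proof.
move: {2}#|D| (leqnn #|D|) => n; elim: n D R => [|n IH] D R D_le hallD.
  move: D_le; rewrite leqn0 cards_eq0 => /eqP->.
  by exists (fun=> y0); split=> x; rewrite inE.
have [|D_gt] := leqP #|D| n; first by move/IH; apply.
case: (boolP [exists P0 : {set X},
         [&& P0 \proper D, P0 != set0 & #|neighbours P0 :&: R| <= #|P0|]]).
  case/existsP => P0 /and3P[ltP0D P0_n0 critP0].
  have sP0D := proper_sub ltP0D.
  have [|f1 f1P] := IH P0 R _ (hall_condition_sub sP0D hallD).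
    by have := proper_card ltP0D; lia.
  have [|f2 f2P] := IH (D :\: P0) (R :\: neighbours P0) _
    (hall_condition_critical hallD sP0D critP0).
    by rewrite cardsDS // -ltnS; move: P0_n0 D_le; rewrite -card_gt0; lia.
  exists (fun x => if x \in P0 then f1 x else f2 x).
  rewrite -[D](setID D P0) (setIidPr sP0D).
  apply: (matching_on_glue (subsetDl _ _) _ f1P f2P).
  move=> x xP0; rewrite !inE negb_and negbK; apply/orP; left.
  have := f1P.2 x xP0; rewrite inE => /andP[f1x_adj _].
  exact: (subsetP (bigcup_sup _ xP0)).
rewrite negb_exists => /forallP no_crit.
have [x0 x0D] : exists x0, x0 \in D by apply/set0Pn; rewrite -card_gt0; lia.
have [y1] : exists y1, y1 \in neighbours [set x0] :&: R.
  by apply/set0Pn; rewrite -card_gt0; apply: leq_trans (hallD _ _); rewrite ?cards1 ?sub1set.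
rewrite /neighbours big_set1 => y1_in.
have surplus (P : {set X}) : P \subset D :\ x0 -> P != set0 -> #|P| < #|neighbours P :&: R|.
  move=> sP P_n0; have := no_crit P; rewrite P_n0 ltnNge.
  by rewrite (sub_proper_trans sP (properD1 x0D)).
have [|f2 f2P] := IH (D :\ x0) (R :\ y1) _ (hall_condition_surplus y1 surplus).
  by rewrite (cardsD1 x0 D) x0D in D_le D_gt *; lia.
exists (fun x => if x \in [set x0] then y1 else f2 x).
rewrite -(setD1K x0D).
apply: (matching_on_glue (subD1set _ _) _ _ f2P) => [x _|]; first by rewrite !inE eqxx.
by split=> [x y /set1P-> /set1P->|x /set1P->].
Qed.

Lemma hall_marriage (y0 : Y) : (forall P : {set X}, #|P| <= #|neighbours P|) ->
  exists f, injective f /\ forall x, f x \in adj x.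
Proof.
move=> hall; have [|f [f_inj f_in]] := @hall_matching_on y0 setT setT.
  by move=> P _; rewrite setIT.
exists f; split=> [x y|x]; first by apply: f_inj; rewrite inE.
by have := f_in x; rewrite !inE andbT; apply.
Qed.

End Hall.

(** * The quotient by H *)

Section Hquotient.
Variables (T : finType) (op : T -> T -> T).
Hypothesis assoc : associative op.

Definition Hrep x := odflt x [pick y | eqH op x y].

Lemma eqH_Hrep x : eqH op x (Hrep x).
Proof. by rewrite /Hrep; case: pickP => [y ->|] //=; rewrite eqH_refl. Qed.

Lemma Hrep_eqH x y : eqH op x y -> Hrep x = Hrep y.
Proof.
move=> xy; have same_class : eqH op x =1 eqH op y.
  move=> w; apply/idP/idP; last exact: (eqH_trans assoc xy).
  by apply: (eqH_trans assoc); rewrite eqH_sym.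
rewrite /Hrep (eq_pick same_class); case: pickP => // none.
by have := none y; rewrite eqH_refl.
Qed.

Lemma Hrep_idem x : Hrep (Hrep x) == Hrep x.
Proof. by apply/eqP/esym/Hrep_eqH/eqH_Hrep. Qed.

Definition Hquot := {x | Hrep x == x}.
Definition Hproj x : Hquot := exist _ (Hrep x) (Hrep_idem x).
Definition Hquot_op (u v : Hquot) := Hproj (op (val u) (val v)).

Lemma HprojK u : Hproj (val u) = u.
Proof. by apply: val_inj; rewrite /= (eqP (valP u)). Qed.

Lemma Hproj_eqE x y : (Hproj x == Hproj y) = eqH op x y.
Proof.
rewrite -val_eqE /=; apply/eqP/idP => [xy|]; last exact: Hrep_eqH.
by apply: (eqH_trans assoc (eqH_Hrep x)); rewrite xy eqH_sym eqH_Hrep.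
Qed.

Lemma card_Hquot_lt a b : a != b -> eqH op a b -> #|{: Hquot}| < #|T|.
Proof.
move=> a_neq_b ab; rewrite card_sig -(cardC [pred x | Hrep x == x]) -addn1 leq_add2l.
apply/card_gt0P; have [a_rep|] := eqVneq (Hrep a) a; last by exists a.
exists b; rewrite !inE; apply: contra a_neq_b => /eqP b_rep.
by rewrite -a_rep -b_rep (Hrep_eqH ab).
Qed.

End Hquotient.

(** * Semigroups whose nonzero elements form one J-class *)

Lemma inverse_zero (T : finType) (op : T -> T -> T) z u :
  is_zero op z -> inverseb op u z -> u = z.
Proof. by move=> zero_z /andP[/eqP <- _]; rewrite (zero_z u).2 (zero_z u).1. Qed.

Section ZeroJclass.
Variables (T : finType) (op : T -> T -> T).
Hypothesis assoc : associative op.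
Variable z : T.
Hypothesis zero_z : is_zero op z.
Hypothesis nonzero_eqJ : forall x y, x != z -> y != z -> eqJ op x y.

Local Notation Hproj := (Hproj assoc).
Local Notation Hquot_op := (Hquot_op assoc).
Local Notation Hquot := (Hquot op).

Lemma mul0l x : op z x = z. Proof. by case: (zero_z x). Qed.
Lemma mul0r x : op x z = z. Proof. by case: (zero_z x). Qed.

Lemma mul_neq0l a b : op a b != z -> a != z.
Proof. by apply: contra => /eqP->; rewrite mul0l. Qed.
Lemma mul_neq0r a b : op a b != z -> b != z.
Proof. by apply: contra => /eqP->; rewrite mul0r. Qed.

Lemma mul_eqR a b : op a b != z -> eqR op (op a b) a.
Proof.
move=> ab_n0; have /andP[a_le _] := nonzero_eqJ (mul_neq0l ab_n0) ab_n0.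
have [u a_eq] := stable_right assoc a_le.
by rewrite /eqR leR_mulr; apply/existsP; exists (Some u); rewrite /= -a_eq.
Qed.

Lemma mul_eqL a b : op a b != z -> eqL op (op a b) b.
Proof.
move=> ab_n0; have /andP[b_le _] := nonzero_eqJ (mul_neq0r ab_n0) ab_n0.
have [u b_eq] := stable_left assoc b_le.
by rewrite /eqL leL_mull; apply/existsP; exists (Some u); rewrite /= -b_eq.
Qed.

Lemma mul_neq0_leL a a' b : leL op a a' -> op a b != z -> op a' b != z.
Proof.
move=> /existsP[[s|] /eqP->] //=; apply: contra => /eqP ab_eq.
by rewrite -assoc ab_eq mul0r.
Qed.

Lemma mul_neq0_leR b b' a : leR op b b' -> op a b != z -> op a b' != z.
Proof.
move=> /existsP[[t|] /eqP->] //=; apply: contra => /eqP ab_eq.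
by rewrite assoc ab_eq mul0l.
Qed.

Lemma eqH_zero y : eqH op z y -> y = z.
Proof. by case/andP=> /andP[_ /existsP[[t|] /eqP->]] //=; rewrite mul0l. Qed.

Lemma neq0_eqH x y : eqH op x y -> x != z -> y != z.
Proof. by move=> xy; apply: contra => /eqP y_z; apply/eqP/eqH_zero; rewrite eqH_sym -y_z. Qed.

(* H is a congruence because nonzero products ab are R-related to a and L-related to b. *)
Lemma eqH_mul a a' b b' : eqH op a a' -> eqH op b b' -> eqH op (op a b) (op a' b').
Proof.
move=> aHa' bHb'; have := aHa'; have := bHb'.
move=> /andP[/andP[b_b' b'_b] _] /andP[_ /andP[a_a' a'_a]].
have [ab_z|ab_n0] := eqVneq (op a b) z.
  suff -> : op a' b' = z by rewrite ab_z eqH_refl.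
  apply/eqP/negPn/negP => a'b'_n0.
  by move: (mul_neq0_leR b'_b (mul_neq0_leL a'_a a'b'_n0)); rewrite ab_z eqxx.
have a'b'_n0 := mul_neq0_leR b_b' (mul_neq0_leL a_a' ab_n0).
apply/andP; split.
  apply: (eqR_trans assoc (mul_eqR ab_n0)); apply: (eqR_trans assoc (y := a')).
    by case/andP: aHa'.
  by rewrite eqR_sym mul_eqR.
apply: (eqL_trans assoc (mul_eqL ab_n0)); apply: (eqL_trans assoc (y := b')).
  by case/andP: bHb'.
by rewrite eqL_sym mul_eqL.
Qed.

Lemma Hsize_neq0 x y : x != z -> y != z -> Hsize op x = Hsize op y.
Proof.
move=> x_n0 y_n0.
have /andP[_ /existsP[s /existsP[t /eqP y_eq]]] := nonzero_eqJ x_n0 y_n0.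
rewrite -(lmul1_rmul1 assoc) in y_eq.
have xt_n0 : rmul1 op t x != z.
  by apply: contra y_n0 => /eqP xt_z; rewrite y_eq xt_z; case: s {y_eq} => //= s; rewrite mul0r.
have -> : Hsize op x = Hsize op (rmul1 op t x).
  by case: t xt_n0 {y_eq} => //= t xt_n0; rewrite (Hsize_eqR assoc (mul_eqR xt_n0)).
rewrite y_eq in y_n0 *; case: s y_n0 {y_eq} => //= s sxt_n0.
by rewrite (Hsize_eqL assoc (mul_eqL sxt_n0)).
Qed.

(* With x = av: x lies in a group H-class, e = xy = yx (y its group inverse) is
   R-related to a and L-related to v, and b = vy is the required inverse. *)
Lemma lift_inverse a v :
  eqH op (op (op a v) a) a -> eqH op (op (op v a) v) v ->
  exists2 b, inverseb op a b & eqH op b v.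
Proof.
move=> avaHa vavHv; have [a_z|a_n0] := eqVneq a z.
  move: vavHv; rewrite a_z mul0r mul0l => /eqH_zero->.
  by exists z; rewrite ?eqH_refl // /inverseb !mul0l eqxx.
have ava_n0 : op (op a v) a != z by rewrite eqH_sym in avaHa; apply: neq0_eqH avaHa a_n0.
set x := op a v; have x_n0 : x != z := mul_neq0l ava_n0.
have xxHx : eqH op (op x x) x by rewrite /x assoc; apply: eqH_mul avaHa (eqH_refl _ _).
have xx_n0 : op x x != z by rewrite eqH_sym in xxHx; apply: neq0_eqH xxHx x_n0.
have /andP[x_le_xx _] := nonzero_eqJ x_n0 xx_n0.
have [/andP[/eqP xyx /eqP yxy] xy_yx] := group_inverse_spec assoc x_le_xx.
set y := group_inverse op x in xyx yxy xy_yx.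
have xy_n0 : op x y != z by apply: contra x_n0 => /eqP xy_z; rewrite -xyx xy_z mul0l.
have yx_n0 : op y x != z by rewrite -xy_yx.
have e_idem : op (op x y) (op x y) = op x y by rewrite assoc xyx.
have ea : op (op x y) a = a.
  apply: (leR_idempotent assoc _ e_idem).
  by case/andP: (eqR_trans assoc (mul_eqR xy_n0) (mul_eqR x_n0)).
have ve : op v (op x y) = v.
  apply: (leL_idempotent assoc _ e_idem); rewrite xy_yx.
  by case/andP: (eqL_trans assoc (mul_eqL yx_n0) (mul_eqL x_n0)).
have aba : op (op a (op v y)) a = a by rewrite assoc -/x ea.
have vab : op (op v a) (op v y) = v by rewrite -assoc [op a _]assoc -/x ve.
have b_n0 : op v y != z by apply: contra a_n0 => /eqP b_z; rewrite -aba b_z mul0r mul0l.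
have bab : op (op (op v y) a) (op v y) = op v y.
  by rewrite -!assoc [op a (op v y)]assoc -/x [op y (op x y)]assoc yxy.
exists (op v y); first by rewrite /inverseb aba bab !eqxx.
have vab_n0 : op (op v a) (op v y) != z by rewrite vab (mul_neq0r x_n0).
by rewrite /eqH mul_eqR //=; have := mul_eqL vab_n0; rewrite vab eqL_sym.
Qed.

Lemma ideal_zero_or_full I : is_ideal op I -> I = [set z] \/ I = setT.
Proof.
rewrite /is_ideal => -[/set0Pn[x0 x0_in] closed].
have closed1 s t x : x \in I -> rmul1 op t (lmul1 op s x) \in I.
  move=> x_in; have sx_in : lmul1 op s x \in I by case: s => //= s; case: (closed x s x_in).
  by case: t => //= t; case: (closed _ t sx_in).
have [x /andP[x_in x_n0]|all_z] := pickP [pred x | (x \in I) && (x != z)].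
  right; apply/setP => y; rewrite inE; have [->|y_n0] := eqVneq y z.
    by case: (closed x z x_in) => _; rewrite mul0r.
  by have /andP[_ /existsP[s /existsP[t /eqP->]]] := nonzero_eqJ x_n0 y_n0; apply: closed1.
left; apply/setP => y; rewrite inE; apply/idP/eqP => [y_in|->].
  by apply/eqP; have := all_z y; rewrite /= y_in => /negbFE.
by have := all_z x0; rewrite /= x0_in => /negbFE/eqP <-.
Qed.

Lemma zero_simple_of_mul_neq0 a b : op a b != z -> zero_simple op z.
Proof.
move=> ab_n0; split=> //; split; last exact: ideal_zero_or_full.
by exists a, b; apply/eqP.
Qed.

Lemma primitive_idempotent_neq0 e : op e e = e -> e != z -> primitive_idempotent op z e.
Proof.
move=> ee e_n0; split=> //; split=> [|f ff f_z ef fe]; first exact/eqP.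
have /andP[e_le _] := nonzero_eqJ e_n0 (introN eqP f_z).
rewrite -ef in e_le; have [u e_eq] := stable_right assoc e_le.
by rewrite ef in e_eq; rewrite -fe {1}e_eq assoc ff -e_eq.
Qed.

Lemma Hproj_mul x y : Hquot_op (Hproj x) (Hproj y) = Hproj (op x y).
Proof. by apply/eqP; rewrite Hproj_eqE eqH_sym eqH_mul ?eqH_Hrep. Qed.

Lemma Hquot_assoc : associative Hquot_op.
Proof.
by move=> u v w; rewrite -[u]HprojK -[v]HprojK -[w]HprojK !Hproj_mul assoc.
Qed.

Lemma Hquot_zero : is_zero Hquot_op (Hproj z).
Proof. by move=> u; rewrite -[u]HprojK !Hproj_mul mul0l mul0r. Qed.

Lemma Hproj_inverseE a b : inverseb Hquot_op (Hproj a) (Hproj b) =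
  eqH op (op (op a b) a) a && eqH op (op (op b a) b) b.
Proof. by rewrite /inverseb !Hproj_mul !Hproj_eqE. Qed.

Lemma Hquot_involution_matching :
  has_involution_matching Hquot_op -> has_involution_matching op.
Proof.
move=> [psi [[_ psi_inv] psiK]].
pose v a := val (psi (Hproj a)).
have v_inv a : eqH op (op (op a (v a)) a) a && eqH op (op (op (v a) a) (v a)) (v a).
  by rewrite -Hproj_inverseE HprojK; apply/inverseP.
pose th a := odflt a [pick b | inverseb op a b && eqH op b (v a)].
have thP a : inverseb op a (th a) && eqH op (th a) (v a).
  rewrite /th; case: pickP => [b -> //|none].
  have /andP[ava vav] := v_inv a; have [b ab bv] := lift_inverse ava vav.
  by have := none b; rewrite ab bv.
have Hproj_th a : Hproj (th a) = psi (Hproj a).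
  by apply/eqP; rewrite -[psi _]HprojK Hproj_eqE; case/andP: (thP a).
have thK a : th (th a) = a.
  have /andP[inv_tth tth_v] := thP (th a).
  apply: (inverse_eqH_unique assoc inv_tth); first by rewrite inverseb_sym; case/andP: (thP a).
  apply: (eqH_trans assoc tth_v).
  by rewrite /v Hproj_th psiK /= eqH_sym eqH_Hrep.
exists th; split; last exact: thK.
split; first exact: inv_bij thK.
by move=> a; apply/inverseP; case/andP: (thP a).
Qed.

Lemma card_Hproj_preimage w0 (Q : {set Hquot}) : w0 != z -> Hproj z \notin Q ->
  #|[set a | Hproj a \in Q]| = #|Q| * Hsize op w0.
Proof.
move=> w0_n0 zQ; rewrite -sum1_card (partition_big Hproj (mem Q)) /=; last first.
  by move=> a; rewrite inE.
rewrite -sum_nat_const; apply: eq_bigr => u uQ.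
have u_n0 : val u != z.
  by apply: contra zQ => /eqP u_z; rewrite -u_z HprojK.
rewrite sum1_card (Hsize_neq0 w0_n0 u_n0); apply: eq_card => a.
have Hproj_u x : (Hproj x == u) = eqH op x (val u) by rewrite -[u in LHS]HprojK Hproj_eqE.
by rewrite unfold_in !inE Hproj_u andb_idl // -Hproj_u => /eqP->.
Qed.

Definition Hquot_inverses (u : Hquot) := [set v | inverseb Hquot_op u v].

Lemma Hquot_hall phi w0 : permutation_matching op phi -> w0 != z ->
  forall P : {set Hquot}, #|P| <= #|neighbours Hquot_inverses P|.
Proof.
move=> [phi_bij phi_inv] w0_n0.
have zN (P : {set Hquot}) : Hproj z \notin P -> Hproj z \notin neighbours Hquot_inverses P.
  apply: contra => /bigcupP[u uP]; rewrite inE => /(inverse_zero Hquot_zero) u_z.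
  by rewrite -u_z.
have Hsize_gt0 : 0 < Hsize op w0 by apply/card_gt0P; exists w0; rewrite inE eqH_refl.
(* With c the common size of the nonzero H-classes, phi maps the |P|c elements
   over P into the |N(P)|c elements over N(P). *)
have hall_nz (P : {set Hquot}) : Hproj z \notin P -> #|P| <= #|neighbours Hquot_inverses P|.
  move=> zP; rewrite -(leq_pmul2r Hsize_gt0) -!card_Hproj_preimage ?zN //.
  rewrite -(card_imset _ (bij_inj phi_bij)); apply/subset_leq_card/subsetP => _ /imsetP[a aP ->].
  rewrite !inE in aP *; apply/bigcupP; exists (Hproj a) => //.
  by rewrite inE Hproj_inverseE; have /inverseP/andP[/eqP-> /eqP->] := phi_inv a; rewrite !eqH_refl.
move=> P; have [zP|] := boolP (Hproj z \in P); last exact: hall_nz.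
have zPz : Hproj z \notin P :\ Hproj z by rewrite !inE eqxx.
rewrite (cardsD1 (Hproj z) P) zP add1n; apply: leq_ltn_trans (hall_nz _ zPz) _.
have sN : Hproj z |: neighbours Hquot_inverses (P :\ Hproj z) \subset neighbours Hquot_inverses P.
  apply/subsetP => y; rewrite !inE => /orP[/eqP->|/bigcupP[u]].
    by apply/bigcupP; exists (Hproj z); rewrite // inE /inverseb !(Hquot_zero (Hproj z)).1 eqxx.
  by move=> /setD1P[_ uP] yu; apply/bigcupP; exists u.
by apply: leq_trans (subset_leq_card sN); rewrite cardsU1 zN.
Qed.

Lemma Hquot_permutation_matching phi w0 :
  permutation_matching op phi -> w0 != z -> has_permutation_matching Hquot_op.
Proof.
move=> phiP w0_n0; have [f [f_inj f_inv]] := hall_marriage (Hproj z) (Hquot_hall phiP w0_n0).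
exists f; split; first exact: injF_bij.
by move=> u; apply/inverseP; have := f_inv u; rewrite inE.
Qed.

End ZeroJclass.

(** * Minimal counterexamples *)

Lemma regular_of_permutation_matching (T : finType) (op : T -> T -> T) :
  has_permutation_matching op -> regular_sg op.
Proof. by case=> phi [_ phi_inv] a; exists (phi a); case: (phi_inv a). Qed.

Lemma greenH_eqH (T : finType) (op : T -> T -> T) a b : greenH op a b -> eqH op a b.
Proof.
move=> [R_ab L_ab]; apply/andP; split; apply/andP; split.
- by case: ((R_ab a).1 (or_introl erefl)) => [->|[s ->]]; [exact: leR_refl|exact: leR_mulr].
- by case: ((R_ab b).2 (or_introl erefl)) => [->|[s ->]]; [exact: leR_refl|exact: leR_mulr].
- by case: ((L_ab a).1 (or_introl erefl)) => [->|[s ->]]; [exact: leL_refl|exact: leL_mull].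
- by case: ((L_ab b).2 (or_introl erefl)) => [->|[s ->]]; [exact: leL_refl|exact: leL_mull].
Qed.

Definition counterexample_bound (n : nat) :=
  forall (T' : finType) (op' : T' -> T' -> T'), semigroup op' -> regular_sg op' ->
    has_permutation_matching op' -> ~ has_involution_matching op' -> n <= #|T'|.

Lemma card_le_principal_factor (T : finType) (op : T -> T -> T) phi a0 :
  associative op -> permutation_matching op phi ->
  ~~ has_local_involution op (Jclass op a0) -> counterexample_bound #|T| ->
  #|T| <= #|Jclass op a0|.+1.
Proof.
move=> assoc phiP no_loc minimal; rewrite -(card_factor op a0).
have pm0 : has_permutation_matching _ := ex_intro _ _ (factor_permutation_matching assoc a0 phiP).
apply: (minimal _ _ (factor_assoc assoc (a0 := a0)) (regular_of_permutation_matching pm0) pm0).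
by move/(local_involution_of_factor assoc); apply/negP.
Qed.

Lemma eqH_trivial_of_bound (T : finType) (op : T -> T -> T) z phi w0 :
  associative op -> is_zero op z -> (forall x y, x != z -> y != z -> eqJ op x y) ->
  permutation_matching op phi -> w0 != z -> ~ has_involution_matching op ->
  counterexample_bound #|T| -> forall a b, eqH op a b -> a = b.
Proof.
move=> assoc zero_z nonzero_eqJ phiP w0_n0 no_inv minimal a b ab.
apply/eqP/negPn/negP => a_neq_b.
have pmH := Hquot_permutation_matching assoc zero_z nonzero_eqJ phiP w0_n0.
have := minimal _ _ (Hquot_assoc assoc zero_z nonzero_eqJ) (regular_of_permutation_matching pmH)
  pmH (fun invH => no_inv (Hquot_involution_matching zero_z nonzero_eqJ invH)).
by rewrite leqNgt (card_Hquot_lt assoc a_neq_b ab).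
Qed.

Lemma Jclass_not_square_closed (T : finType) (op : T -> T -> T) a0 :
  associative op -> ~~ has_local_involution op (Jclass op a0) ->
  exists2 a, a \in Jclass op a0 & op a a \notin Jclass op a0.
Proof.
move=> assoc no_loc; apply/exists_inP; apply: contraR no_loc.
move/exists_inP => not_ex; apply: (local_involution_square_closed assoc) => a a_in.
by apply/negPn/negP => aa_notin; apply: not_ex; exists a.
Qed.

Lemma zero_of_Jclass_cover (T : finType) (op : T -> T -> T) a0 z :
  associative op -> z |: Jclass op a0 = setT -> z \notin Jclass op a0 -> leJ op z a0 ->
  is_zero op z /\ forall x y, x != z -> y != z -> eqJ op x y.
Proof.
move=> assoc cover z_notin z_le.
have in_J x : x != z -> eqJ op a0 x.
  by move=> x_n0; have := in_setT x; rewrite -cover !inE (negbTE x_n0).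
have below_z x : leJ op x z -> x = z.
  move=> x_le; apply/eqP; apply: contraR z_notin => /in_J/andP[a0_le _].
  by rewrite inJclass /eqJ z_le (leJ_trans assoc a0_le x_le).
split=> [x|x y /in_J a0x /in_J a0y]; last by rewrite eqJ_sym in a0x; apply: (eqJ_trans assoc a0x).
by split; apply: below_z; [apply/leR_leJ/leR_mulr | apply/leL_leJ/leL_mull].
Qed.

Theorem proposition2p1 (T : finType) (op : T -> T -> T) :
  semigroup op -> regular_sg op ->
  has_permutation_matching op -> ~ has_involution_matching op ->
  (forall (T' : finType) (op' : T' -> T' -> T'),
      semigroup op' -> regular_sg op' ->
      has_permutation_matching op' -> ~ has_involution_matching op' ->
      #|T| <= #|T'|) ->
  zero_rectangular_band op.
Proof.
move=> assoc _ [phi phiP] no_inv minimal.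
have [a0 no_loc] : exists a0, ~~ has_local_involution op (Jclass op a0).
  apply/existsP; rewrite -negb_forall; apply/negP => /forallP loc.
  exact: no_inv (involution_matching_of_local assoc loc).
have [a a_in aa_notin] := Jclass_not_square_closed assoc no_loc.
have cover : op a a |: Jclass op a0 = setT.
  apply/eqP; rewrite eqEcard subsetT cardsT cardsU1 aa_notin add1n.
  exact: card_le_principal_factor assoc phiP no_loc minimal.
have aa_le : leJ op (op a a) a0.
  by rewrite inJclass in a_in; case/andP: a_in => _; apply/leJ_trans/leR_leJ/leR_mulr.
have [zero_aa nonzero_eqJ] := zero_of_Jclass_cover assoc cover aa_notin aa_le.
have a_n0 : a != op a a by apply: contraNneq aa_notin => <-.
have [a_pa_a _] := phiP.2 a.
have e_n0 : op a (phi a) != op a a.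
  by apply: contra a_n0 => /eqP e_z; rewrite -{1}a_pa_a e_z (zero_aa a).1.
split; last first.
  move=> b c /greenH_eqH.
  exact: (eqH_trivial_of_bound assoc zero_aa nonzero_eqJ phiP a_n0 no_inv minimal).
exists (op a a); split; first exact: (zero_simple_of_mul_neq0 zero_aa nonzero_eqJ e_n0).
exists (op a (phi a)); apply: (primitive_idempotent_neq0 assoc nonzero_eqJ) => //.
by rewrite assoc a_pa_a.
Qed.
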